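(* Let $X$ be a finite connected poset and $\theta\in\mathcal{M}(X)$. Then $\theta\in\mathcal{AM}(X)$ if and only if $s^+_{\theta,\Gamma}(z)-s^-_{\theta,\Gamma}(z)=t^+_{\theta,\Gamma}(z)-t^-_{\theta,\Gamma}(z)$ holds for every $z\in X$ and every weak crown $\Gamma$ in $X$, i.e. every closed semiwalk $\Gamma: x_1<y_1>x_2<y_2>\dots>x_n<y_n>x_1$ with $n\ge2$ and $x_1,\dots,x_n,y_1,\dots,y_n$ pairwise distinct.
   Context: For $x<y$, $e_{xy}$ denotes the incidence-algebra basis element and $B=\{e_{xy}:x<y\}$. For a bijection $\theta:B\to B$ and a maximal chain $C:u_1<\dots<u_k$, $\theta$ is increasing on $C$ if there is a maximal chain $D:v_1<\dots<v_k$ with $\theta(e_{u_iu_j})=e_{v_iv_j}$ for all $i<j$, decreasing if $\theta(e_{u_iu_j})=e_{v_{k-j+1}v_{k-i+1}}$ for all $i<j$. $\mathcal{M}(X)$ is the set of bijections $B\to B$ increasing or decreasing on every maximal chain. A semiwalk is a sequence $u_0,\dots,u_m$ with $u_i<u_{i+1}$ or $u_i>u_{i+1}$ for each $i$; a walk is a semiwalk in which one of $u_i,u_{i+1}$ covers the other for each $i$; closed if $u_0=u_m$. For a closed semiwalk $\Gamma:u_0,\dots,u_m=u_0$ and $z\in X$: $s^+_{\theta,\Gamma}(z)=|\{i: u_i<u_{i+1},\ \exists w>z,\ \theta(e_{zw})=e_{u_iu_{i+1}}\}|$, $s^-_{\theta,\Gamma}(z)=|\{i: u_i>u_{i+1},\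 \exists w>z,\ \theta(e_{zw})=e_{u_{i+1}u_i}\}|$, $t^+_{\theta,\Gamma}(z)=|\{i: u_i<u_{i+1},\ \exists w<z,\ \theta(e_{wz})=e_{u_iu_{i+1}}\}|$, $t^-_{\theta,\Gamma}(z)=|\{i: u_i>u_{i+1},\ \exists w<z,\ \theta(e_{wz})=e_{u_{i+1}u_i}\}|$, $0\le i\le m-1$. $\theta$ is admissible if $s^+-s^-=t^+-t^-$ at every $z$ for every closed walk; $\mathcal{AM}(X)$ is the set of admissible elements of $\mathcal{M}(X)$. A weak $n$-crown is a poset on distinct $x_1,\dots,x_n,y_1,\dots,y_n$ with $x_i<y_i$, $x_{i+1}<y_i$ ($i<n$) and $x_1<y_n$ (further comparabilities allowed). *)

From mathcomp Require Import all_boot all_order all_algebra.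
Set Implicit Arguments. Unset Strict Implicit. Unset Printing Implicit Defensive.
Import Order.Theory.

Local Open Scope order_scope.

Section PosetDefs.
Context {d : Order.disp_t} {X : finPOrderType d}.

(* The basis B = { e_xy : x < y } *)
Definition B := {p : X * X | p.1 < p.2}.

Definition thmap (th : B -> B) (p : X * X) : option (X * X) :=
  omap (fun b : B => val (th b)) (insub p).

Definition scomp (x y : X) : bool := (x < y) || (y < x).

Definition covers (x y : X) : bool := (x < y) && [forall z : X, ~~ ((x < z) && (z < y))].
Definition covcomp (x y : X) : bool := covers x y || covers y x.

Definition connected_poset : Prop := forall x y : X, connect scomp x y.

Definition chain (c : seq X) : bool := sorted <%O c.
Definition maximal_chain (c : seq X) : Prop :=
  chain c /\ forall c' : seq X, chain c' -> {subset c <= c'} -> {subset c' <= c}.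

Definition increasing_on (th : B -> B) (C : seq X) : Prop :=
  exists D : seq X, maximal_chain D /\ size D = size C /\
    forall (i j : nat) (x0 : X), (i < j < size C)%N ->
      thmap th (nth x0 C i, nth x0 C j) = Some (nth x0 D i, nth x0 D j).

Definition decreasing_on (th : B -> B) (C : seq X) : Prop :=
  exists D : seq X, maximal_chain D /\ size D = size C /\
    forall (i j : nat) (x0 : X), (i < j < size C)%N ->
      thmap th (nth x0 C i, nth x0 C j) = Some (nth x0 (rev D) j, nth x0 (rev D) i).

Definition inM (th : B -> B) : Prop :=
  bijective th /\
  forall C : seq X, maximal_chain C -> increasing_on th C \/ decreasing_on th C.

(* A (closed) semiwalk / walk u0, u1, ..., um is represented as u0 :: us. *)
Definition closed_semiwalk (u0 : X) (us : seq X) : bool :=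
  path scomp u0 us && (last u0 us == u0).
Definition closed_walk (u0 : X) (us : seq X) : bool :=
  path covcomp u0 us && (last u0 us == u0).

Definition steps (u0 : X) (us : seq X) : seq (X * X) := zip (u0 :: us) us.

Definition s_plus (th : B -> B) (u0 : X) (us : seq X) (z : X) : nat :=
  count (fun p : X * X => (p.1 < p.2) &&
           [exists w : X, (z < w) && (thmap th (z, w) == Some p)]) (steps u0 us).
Definition s_minus (th : B -> B) (u0 : X) (us : seq X) (z : X) : nat :=
  count (fun p : X * X => (p.2 < p.1) &&
           [exists w : X, (z < w) && (thmap th (z, w) == Some (p.2, p.1))]) (steps u0 us).
Definition t_plus (th : B -> B) (u0 : X) (us : seq X) (z : X) : nat :=
  count (fun p : X * X => (p.1 < p.2) &&
           [exists w : X, (w < z) && (thmap th (w, z) == Some p)]) (steps u0 us).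
Definition t_minus (th : B -> B) (u0 : X) (us : seq X) (z : X) : nat :=
  count (fun p : X * X => (p.2 < p.1) &&
           [exists w : X, (w < z) && (thmap th (w, z) == Some (p.2, p.1))]) (steps u0 us).

Definition balanced (th : B -> B) (u0 : X) (us : seq X) (z : X) : Prop :=
  ((s_plus th u0 us z)%:Z - (s_minus th u0 us z)%:Z =
   (t_plus th u0 us z)%:Z - (t_minus th u0 us z)%:Z)%R.

Definition admissible (th : B -> B) : Prop :=
  forall (u0 : X) (us : seq X), closed_walk u0 us -> forall z : X, balanced th u0 us z.

Definition inAM (th : B -> B) : Prop := inM th /\ admissible th.

(* Weak crown x1 < y1 > x2 < y2 > ... > xn < yn > x1, with xs = x1 :: xr,
   as the closed semiwalk u0 = x1, us = y1, x2, y2, x3, ..., yn, x1. *)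
Definition crown_walk (x1 : X) (xr ys : seq X) : seq X :=
  flatten [seq [:: p.1; p.2] | p <- zip ys (rcons xr x1)].

Definition weak_crown (x1 : X) (xr ys : seq X) : bool :=
  [&& (2 <= size ys)%N, size ys == (size xr).+1,
      uniq (x1 :: xr ++ ys),
      all (fun p : X * X => p.1 < p.2) (zip (x1 :: xr) ys) &
      all (fun p : X * X => p.2 < p.1) (zip ys (rcons xr x1))].

End PosetDefs.

(* Fix z and let w(u, v) be the contribution of a step u, v of a walk to
   s^+ - s^- - t^+ + t^- at z, so that a walk is balanced at z iff its w-sum
   vanishes; w is antisymmetric.  The point is that w is additive along chains,
   w(a, c) = w(a, b) + w(b, c) for a < b < c.  Indeed theta maps the pairs of each
   maximal chain onto the pairs of a maximal chain; being injective, it permutes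
   these finitely many sets of pairs, so the pairs of a maximal chain through
   a, b, c come from a maximal chain, and theta^-1 carries e_ab, e_bc, e_ac to
   e_pq, e_qr, e_pr (or to e_qr, e_pq, e_pr) for some p < q < r.
   For an antisymmetric w additive along chains, a step between comparable
   elements has the same w-sum as a saturated chain between them, so weak crowns
   may be replaced by closed walks.  Conversely a closed semiwalk splits at a
   repeated vertex into two shorter ones, loses the middle vertex of any monotone
   triple a < b < c, and otherwise, rooted at a minimal vertex, is a weak crown
   (or has at most two steps). *)

From mathcomp Require Import all_boot all_order all_algebra zify ring.
Set Implicit Arguments. Unset Strict Implicit. Unset Printing Implicit Defensive.
Import Order.Theory GRing.Theory.
Local Open Scope order_scope.

Section WalkSum.
Variables (T : eqType) (R : zmodType) (G : T -> T -> R).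

Definition walk_sum (x : T) (s : seq T) : R := (\sum_(v <- pairmap G x s) v)%R.

Lemma walk_sum_nil x : walk_sum x [::] = 0%R.
Proof. exact: big_nil. Qed.

Lemma walk_sum_cons x y s : walk_sum x (y :: s) = (G x y + walk_sum y s)%R.
Proof. exact: big_cons. Qed.

Lemma walk_sum_cat x s1 s2 :
  walk_sum x (s1 ++ s2) = (walk_sum x s1 + walk_sum (last x s1) s2)%R.
Proof. by rewrite /walk_sum pairmap_cat big_cat. Qed.

Lemma nonuniq_decomp (s : seq T) : ~~ uniq s ->
  exists s1 a s2 s3, s = rcons s1 a ++ rcons s2 a ++ s3.
Proof.
elim: s => [|h s IH] //=; rewrite negb_and negbK => /orP[/splitPr[s2 s3]|].
  by exists [::], h, s2, s3; rewrite /= cat_rcons.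
by case/IH=> s1 [a [s2 [s3 ->]]]; exists (h :: s1), a, s2, s3.
Qed.

Variable e : rel T.

Lemma closed_walk_excise x s : path e x s -> last x s = x -> ~~ uniq s ->
  exists a t1 t2, [/\ path e a t1 && (last a t1 == a),
    path e x t2 && (last x t2 == x), size t1 < size s, size t2 < size s
    & walk_sum x s = (walk_sum a t1 + walk_sum x t2)%R]%N.
Proof.
move=> p l /nonuniq_decomp[s1 [a [s2 [s3 Es]]]]; subst s.
move: p l; rewrite !cat_path !last_cat !last_rcons => /and3P[p1 p2 p3] l.
exists a, (rcons s2 a), (rcons s1 a ++ s3); split.
- by rewrite p2 last_rcons eqxx.
- by rewrite cat_path p1 last_rcons p3 last_cat last_rcons l eqxx.
- by rewrite !size_cat !size_rcons; lia.
- by rewrite !size_cat !size_rcons; lia.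
by rewrite !walk_sum_cat !last_rcons addrCA addrA.
Qed.

Lemma closed_walk_rot x s m : path e x s -> last x s = x -> m \in s ->
  exists t, [/\ path e m t, last m t = m, perm_eq s t & walk_sum m t = walk_sum x s].
Proof.
move=> p l /splitPr Es; case: Es p l => s1 s2; rewrite -cat_rcons => p l.
have lm : last m s2 = x by rewrite -(last_rcons x s1 m) -last_cat.
move: p; rewrite cat_path last_rcons => /andP[p1 p2].
exists (s2 ++ rcons s1 m); split.
- by rewrite cat_path p2 lm.
- by rewrite last_cat lm last_rcons.
- by rewrite perm_catC.
by rewrite !walk_sum_cat lm last_rcons addrC.
Qed.

End WalkSum.

Section Fences.
Context {d : Order.disp_t} {X : finPOrderType d}.
Implicit Types (a b c e w x y : X) (s t xr ys : seq X).

Definition between a b c : bool := (a < b < c) || (c < b < a).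

Lemma betweenC a b c : between a b c = between c b a.
Proof. by rewrite /between orbC. Qed.

Lemma between_xxy a b : between a a b = false.
Proof. by rewrite /between !ltxx andbF. Qed.

Lemma between_xyy a b : between a b b = false.
Proof. by rewrite /between !ltxx andbF. Qed.

Lemma between_scompl a b c : between a b c -> scomp a b.
Proof. by rewrite /scomp => /orP[]/andP[h1 h2]; rewrite ?h1 ?h2 ?orbT. Qed.

Lemma between_scompr a b c : between a b c -> scomp b c.
Proof. by rewrite /scomp => /orP[]/andP[h1 h2]; rewrite ?h1 ?h2 ?orbT. Qed.

Lemma between_scomp a b c : between a b c -> scomp a c.
Proof. by rewrite /scomp => /orP[]/andP[/lt_trans h /h ->]; rewrite ?orbT. Qed.

Lemma between_trans a w b y : between a w b -> between a y w -> between a y b.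
Proof.
rewrite /between => /orP[]/andP[aw wb] /orP[]/andP[ay yw].
- by rewrite ay (lt_trans yw wb).
- by have := lt_trans (lt_trans aw ay) yw; rewrite ltxx.
- by have := lt_trans (lt_trans ay yw) wb; rewrite ltxx.
- by rewrite (lt_trans aw ay) yw orbT.
Qed.

Lemma not_between_down a b c : a < b -> ~~ between a b c -> scomp b c -> c < b.
Proof. by rewrite /between /scomp => -> /= /norP[/negPf -> _]. Qed.

Lemma not_between_up a b c : b < a -> ~~ between a b c -> scomp b c -> b < c.
Proof.
by rewrite /between /scomp => ->; rewrite andbT => /norP[_ /negPf ->]; rewrite orbF.
Qed.

Lemma scompC a b : scomp a b = scomp b a.
Proof. by rewrite /scomp orbC. Qed.

Lemma scomp_lt a b : scomp a b -> ~~ (b < a) -> a < b.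
Proof. by case/orP=> // ->. Qed.

Lemma no_between_covcomp a b : scomp a b -> (forall y, ~~ between a y b) -> covcomp a b.
Proof.
rewrite /covcomp /covers => /orP[] -> nb; apply/orP; [left | right];
  by apply/forallP => y; have /norP[] := nb y.
Qed.

Fixpoint zigzag s : bool :=
  if s is a :: s' then
    if s' is b :: c :: _ then ~~ between a b c && zigzag s' else true
  else true.

Lemma zigzag_cons a b c s :
  zigzag [:: a, b, c & s] = ~~ between a b c && zigzag [:: b, c & s].
Proof. by []. Qed.

Lemma zigzag_behead s : zigzag s -> zigzag (behead s).
Proof. by case: s => [|a [|b [|c s]]] //= /andP[]. Qed.

Lemma seq_minimal s : s != [::] -> exists2 m, m \in s & {in s, forall y, ~~ (y < m)}.
Proof.
case: s => [//|x0 s] _.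
case: (@arg_minnP _ x0 (mem (x0 :: s)) (fun m => #|[set y | y < m]|)) => [|m ms mmin].
  exact: mem_head.
exists m => // y ys; apply/negP => ym; have := mmin y ys; apply/negP; rewrite -ltnNge.
apply: proper_card; apply/properP; split; last by exists y; rewrite !inE ?ltxx.
by apply/subsetP => w; rewrite !inE => /lt_trans; apply.
Qed.

Definition interleave ys xs : seq X := flatten [seq [:: p.1; p.2] | p <- zip ys xs].

Lemma interleave_cons y ys x xs :
  interleave (y :: ys) (x :: xs) = y :: x :: interleave ys xs.
Proof. by []. Qed.

Lemma perm_interleave ys xs : size ys = size xs -> perm_eq (interleave ys xs) (ys ++ xs).
Proof.
elim: ys xs => [|y ys IH] [|x xs] //= [/IH IHys]; rewrite interleave_cons perm_cons.
by rewrite -[x :: xs]cat1s perm_sym perm_catCA perm_cons perm_sym.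
Qed.

Definition fence a e xr ys : bool :=
  [&& size ys == (size xr).+1, all (fun p : X * X => p.1 < p.2) (zip (a :: xr) ys)
    & all (fun p : X * X => p.2 < p.1) (zip ys (rcons xr e))].

Lemma weak_crownE x1 xr ys :
  weak_crown x1 xr ys = [&& 1 < size ys, uniq (x1 :: xr ++ ys) & fence x1 x1 xr ys]%N.
Proof. by rewrite /weak_crown /fence; do 2!bool_congr. Qed.

Lemma fence_path a e xr ys : fence a e xr ys ->
  path scomp a (interleave ys (rcons xr e)) /\ last a (interleave ys (rcons xr e)) = e.
Proof.
rewrite /fence; elim: ys xr a => [|y ys IH] [|x xr] a //=.
  by case: ys {IH} => //= /and3P[/andP[ay _] ey _]; rewrite /scomp ay ey orbT.
move=> /and4P[sz /andP[ay up] xy dn]; rewrite /scomp ay xy orbT /=.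
exact/IH/and3P.
Qed.

Lemma zigzag_fence a t e : path scomp a (rcons t e) -> zigzag (a :: rcons t e) ->
  a < head e t -> e < last a t ->
  exists xr ys, rcons t e = interleave ys (rcons xr e) /\ fence a e xr ys.
Proof.
move: {2}(size t) (leqnn (size t)) => n; elim: n a t => [|n IH] a [|y [|x t]] //.
- by move=> _ _ _ /lt_trans h /h; rewrite ltxx.
- by move=> _ _ _ /lt_trans h /h; rewrite ltxx.
- by move=> _ _ _ ay ey; exists [::], [:: y]; rewrite /fence /= ay ey.
rewrite ltnS [rcons _ e]/= [path _ _ _]/= => /ltnW sz /and3P[_ yx p] zz ay ex.
have zz' : zigzag (x :: rcons t e) := zigzag_behead (zigzag_behead zz).
rewrite [rcons _ e]/= headI in zz; case/andP: zz => ayx /andP[yxh _].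
have xy : x < y := not_between_down ay ayx yx.
have xh : x < head e t.
  by apply: (not_between_up xy yxh); move: (p); rewrite headI => /andP[].
have [xr [ys [E F]]] := IH x t sz p zz' xh ex.
exists (x :: xr), (y :: ys); split; first by rewrite [rcons _ e]/= interleave_cons -E.
by move: F; rewrite /fence /= ay xy.
Qed.

Lemma zigzag_crown m t : path scomp m (rcons t m) -> uniq (rcons t m) ->
    zigzag (m :: rcons t m) -> {in rcons t m, forall y, ~~ (y < m)} -> (1 < size t)%N ->
  exists xr ys, rcons t m = crown_walk m xr ys /\ weak_crown m xr ys.
Proof.
case: t => [|y t] // p ut zz mmin t2.
have my : m < y.
  by apply: scomp_lt; [case/andP: p | apply: mmin; rewrite mem_head].
have lm : m < last y t.
  apply: scomp_lt; first by move: p; rewrite rcons_path scompC => /andP[].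
  by apply: mmin; rewrite mem_rcons inE mem_last orbT.
have [xr [ys [E F]]] := zigzag_fence p zz my lm.
exists xr, ys; split=> //; rewrite weak_crownE F andbT.
have sz : size ys = size (rcons xr m) by move: F; rewrite size_rcons => /andP[/eqP].
have := congr1 size E; rewrite (perm_size (perm_interleave sz)) size_cat -sz => sE.
rewrite -(uniq_catCA xr [:: m]) -cat_rcons uniq_catC -(perm_uniq (perm_interleave sz)).
rewrite -E ut.
by move: sE t2; rewrite size_rcons /=; lia.
Qed.

End Fences.

Section CrownReduction.
Context {d : Order.disp_t} {X : finPOrderType d} {R : zmodType} (G : X -> X -> R).
Implicit Types (a b c e w x y : X) (s t xr ys : seq X).
Hypothesis G_anti : forall u v, G u v = (- G v u)%R.
Hypothesis G_add : forall a b c, a < b -> b < c -> G a c = (G a b + G b c)%R.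

Lemma G_between a b c : between a b c -> G a c = (G a b + G b c)%R.
Proof.
case/orP => /andP[ab bc]; first exact: G_add.
by rewrite G_anti (G_add ab bc) opprD -!G_anti addrC.
Qed.

Lemma saturated_walk a b : scomp a b ->
  exists s, [/\ path covcomp a s, last a s = b & walk_sum G a s = G a b].
Proof.
have [n] := ubnP #|[set y | between a y b]|.
elim: n a b => // n IH a b szI sab.
case: (set_0Vmem [set y | between a y b]) => [I0 | [w]]; last rewrite inE => Hw.
  exists [:: b]; rewrite walk_sum_cons walk_sum_nil addr0; split=> //.
  rewrite /= andbT; apply: (no_between_covcomp sab) => y; apply/negP => h.
  by have := in_set0 y; rewrite -I0 inE h.
have [|s1 [p1 l1 e1]] := IH a w _ (between_scompl Hw).
  apply: leq_trans (proper_card _) _; last exact: szI.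
  apply/properP; split; last by exists w; rewrite !inE ?between_xyy.
  by apply/subsetP => y; rewrite !inE; apply: between_trans.
have [|s2 [p2 l2 e2]] := IH w b _ (between_scompr Hw).
  apply: leq_trans (proper_card _) _; last exact: szI.
  apply/properP; split; last by exists w; rewrite !inE ?between_xxy.
  apply/subsetP => y; rewrite !inE => wyb.
  by rewrite betweenC; apply: (between_trans (w := w)); rewrite betweenC.
exists (s1 ++ s2); split; first by rewrite cat_path p1 l1.
- by rewrite last_cat l1.
by rewrite walk_sum_cat e1 l1 e2 (G_between Hw).
Qed.

Lemma semiwalk_refine x s : path scomp x s ->
  exists t, [/\ path covcomp x t, last x t = last x s & walk_sum G x t = walk_sum G x s].
Proof.
elim: s x => [|y s IH] x /=; first by exists [::].
case/andP => /saturated_walk[t1 [p1 l1 e1]] /IH[t2 [p2 l2 e2]].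
exists (t1 ++ t2); split; first by rewrite cat_path p1 l1.
- by rewrite last_cat l1.
by rewrite walk_sum_cat l1 e1 e2 walk_sum_cons.
Qed.

Lemma zigzag_shortcut x s : path scomp x s -> ~~ zigzag (x :: s) ->
  exists t, [/\ path scomp x t, last x t = last x s, (size t < size s)%N
    & walk_sum G x t = walk_sum G x s].
Proof.
elim: s x => [|b s IH] x //; case: s IH => [|c s] IH //.
rewrite zigzag_cons negb_and negbK => /andP[xb p].
case: (boolP (between x b c)) => /= [xbc _ | _ /(IH b p)[t [pt lt szt et]]].
  exists (c :: s); split=> //.
  - by case/andP: p => _ pc; rewrite /= (between_scomp xbc).
  - by rewrite !walk_sum_cons (G_between xbc) addrA.
exists (b :: t); split=> /=; [by rewrite xb | by [] | by rewrite ltnS |].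
by rewrite walk_sum_cons et -walk_sum_cons.
Qed.

Section CrownsVanish.
Hypothesis G_crown : forall x1 xr ys, weak_crown x1 xr ys ->
  walk_sum G x1 (crown_walk x1 xr ys) = 0%R.

Lemma zigzag_cycle_sum m s : path scomp m s -> last m s = m -> uniq s ->
  zigzag (m :: s) -> {in s, forall y, ~~ (y < m)} -> walk_sum G m s = 0%R.
Proof.
case/lastP: s => [|t e]; first by rewrite walk_sum_nil.
move=> p; rewrite last_rcons => em; subst e => ut zz mmin.
case: t p ut zz mmin => [|y [|x t]] p ut zz mmin.
- by move: p; rewrite /= /scomp ltxx.
- by rewrite /= !walk_sum_cons walk_sum_nil addr0 [G y m]G_anti subrr.
by have [xr [ys [-> /G_crown]]] := zigzag_crown p ut zz mmin isT.
Qed.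

Lemma closed_semiwalk_sum_eq0 x s :
  path scomp x s -> last x s = x -> walk_sum G x s = 0%R.
Proof.
have [n] := ubnP (size s); elim: n x s => // n IH x s; rewrite ltnS => sz p l.
have IHlt y t : (size t < size s)%N ->
    path scomp y t -> last y t = y -> walk_sum G y t = 0%R.
  by move=> lt_ts; apply: IH; apply: leq_trans lt_ts sz.
case: (boolP (uniq s)) => us; last first.
  have [a [t1 [t2 [/andP[p1 /eqP l1] /andP[p2 /eqP l2] sz1 sz2 ->]]]] :=
    closed_walk_excise G p l us.
  by rewrite (IHlt _ _ sz1 p1 l1) (IHlt _ _ sz2 p2 l2) addr0.
have [-> | s0] := eqVneq s [::]; first exact: walk_sum_nil.
have [m ms mmin] := seq_minimal s0.
have [t [pt lt st <-]] := closed_walk_rot G p l ms.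
have tmin : {in t, forall y, ~~ (y < m)} by move=> y; rewrite -(perm_mem st); apply: mmin.
case: (boolP (zigzag (m :: t))) => zz.
  by apply: zigzag_cycle_sum; rewrite // -(perm_uniq st).
have [t' [pt' lt' szt' <-]] := zigzag_shortcut pt zz.
by apply: IHlt pt' _; rewrite ?lt' // (perm_size st).
Qed.

End CrownsVanish.

Lemma closed_walk_sum_eq0_iff_crowns :
  (forall x s, closed_walk x s -> walk_sum G x s = 0%R) <->
  (forall x1 xr ys, weak_crown x1 xr ys -> walk_sum G x1 (crown_walk x1 xr ys) = 0%R).
Proof.
split=> [walk0 x1 xr ys | crown0 x s /andP[p /eqP l]].
  rewrite weak_crownE => /and3P[_ _ /fence_path[p l]].
  have [t [pt lt <-]] := semiwalk_refine p.
  by apply: walk0; rewrite /closed_walk pt lt l eqxx.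
apply: closed_semiwalk_sum_eq0 l => //.
by apply: sub_path p => u v /orP[]/andP[+ _]; rewrite /scomp => ->; rewrite ?orbT.
Qed.

End CrownReduction.

Section MaximalChains.
Context {d : Order.disp_t} {X : finPOrderType d}.
Implicit Types (S T : {set X}) (c : seq X).

Definition is_chain S : bool := [forall x in S, forall y in S, x >=< y].

Lemma is_chainP S : reflect {in S &, forall x y, x >=< y} (is_chain S).
Proof.
apply: (iffP forall_inP) => [h x y xS yS | h x xS]; first exact: (forall_inP (h x xS)).
by apply/forall_inP => y; apply: h.
Qed.

Lemma chain_index_lt c x y : chain c -> x \in c -> y \in c ->
  (index x c < index y c)%N = (x < y).
Proof.
by move=> ch xc yc; rewrite -(lt_sorted_ltn_nth x ch) ?inE ?index_mem // !nth_index.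
Qed.

Lemma chain_is_chain c : chain c -> is_chain [set x in c].
Proof.
move=> ch; apply/is_chainP => x y; rewrite !inE => xc yc.
have [ij | ji] := leqP (index x c) (index y c).
  apply: le_comparable.
  by rewrite -(lt_sorted_leq_nth x ch) ?inE ?index_mem // !nth_index in ij.
by apply: ge_comparable; apply: ltW; rewrite -(chain_index_lt ch yc xc).
Qed.

Lemma chain_enum S : is_chain S -> chain (Order.enum S).
Proof.
move=> /is_chainP cS; rewrite /chain lt_sorted_uniq_le Order.enum_uniq /=.
apply: (@sort_sorted_in _ (mem S)); first exact: cS.
by apply/allP => x; rewrite mem_enum.
Qed.

Lemma maxset_maximal_chain S : maxset is_chain S -> maximal_chain (Order.enum S).
Proof.
case/maxsetP => cS Smax; split=> [|c ch sub x xc]; first exact: chain_enum.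
have <- : [set x in c] = S.
  apply: Smax; first exact: chain_is_chain.
  by apply/subsetP => y yS; rewrite inE sub // Order.mem_enum.
by rewrite Order.mem_enum inE.
Qed.

Lemma maximal_chain_maxset c : maximal_chain c -> maxset is_chain [set x in c].
Proof.
case=> ch cmax; apply/maxsetP; split=> [|T cT sub]; first exact: chain_is_chain.
apply/eqP; rewrite eqEsubset sub andbT; apply/subsetP => x xT; rewrite inE.
apply: (cmax _ (chain_enum cT)); last by rewrite Order.mem_enum.
by move=> y yc; rewrite Order.mem_enum (subsetP sub) ?inE.
Qed.

Definition pairs_in (S : {set X}) : {set @B d X} :=
  [set e : B | ((val e).1 \in S) && ((val e).2 \in S)].

Definition maximal_chain_pairs : {set {set @B d X}} :=
  [set pairs_in S | S in maxset is_chain].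

End MaximalChains.

Section ChainImages.
Context {d : Order.disp_t} {X : finPOrderType d}.
Variable th : @B d X -> @B d X.
Implicit Types (a b c p q r u v x y : X) (C D : seq X).

Lemma thmap_val (e : B) : thmap th (val e) = Some (val (th e)).
Proof. by rewrite /thmap valK. Qed.

Lemma thmap_Some pq uv :
  thmap th pq = Some uv -> exists e : B, val e = pq /\ val (th e) = uv.
Proof. by rewrite /thmap; case: insubP => [e _ <- [<-]|//]; exists e. Qed.

Lemma thmap_lt pq uv : thmap th pq = Some uv -> pq.1 < pq.2 /\ uv.1 < uv.2.
Proof. by case/thmap_Some => e [<- <-]; split; [exact: (valP e) | exact: (valP (th e))]. Qed.

Lemma inM_inj : inM th -> injective th.
Proof. by case=> /bij_inj. Qed.

Lemma thmap_inj pq pq' uv : injective th ->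
  thmap th pq = Some uv -> thmap th pq' = Some uv -> pq = pq'.
Proof.
move=> th_inj /thmap_Some[e [<- <-]] /thmap_Some[e' [<- /val_inj/th_inj]].
by move->.
Qed.

(* [inc = false] is the decreasing case, with [C] listed in reverse. *)
Definition maps_chain C D : Prop := exists inc : bool, size C = size D /\
  forall x0 i j, (i < j < size D)%N ->
    thmap th (if inc then (nth x0 C i, nth x0 C j) else (nth x0 C j, nth x0 C i)) =
    Some (nth x0 D i, nth x0 D j).

Lemma inM_maps_chain C : inM th -> maximal_chain C ->
  exists D C', [/\ maximal_chain D, C' =i C & maps_chain C' D].
Proof.
case=> _ /[apply] -[] [D [Dmax [szD R]]].
  by exists D, C; split=> //; exists true; split=> [|x0 i j]; rewrite szD //; apply: R.
exists D, (rev C); split=> //; first exact: mem_rev.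
exists false; rewrite size_rev; split=> // x0 i j /andP[ij]; rewrite szD => jC.
rewrite !nth_rev; try lia.
rewrite R; last by apply/andP; split; lia.
by rewrite !nth_rev ?size_rev; try lia; congr (Some (_, _)); congr nth; lia.
Qed.

Lemma maps_chain_mem C D x y u v : maps_chain C D -> x \in C -> y \in C ->
  thmap th (x, y) = Some (u, v) -> (u \in D) && (v \in D).
Proof.
case=> inc [szC R] xC yC xy; have [/= lt_xy _] := thmap_lt xy.
have iC z : z \in C -> (index z C < size D)%N by rewrite -szC index_mem.
have [ij | ji | ij] := ltngtP (index x C) (index y C).
- have := R x (index x C) (index y C); rewrite ij iC // !nth_index // => /(_ isT).
  case: inc {R} => [|/thmap_lt[/= lt_yx _]]; last by rewrite lt_gtF in lt_yx.
  by rewrite xy => -[-> ->]; rewrite !mem_nth ?iC.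
- have := R x (index y C) (index x C); rewrite ji iC // !nth_index // => /(_ isT).
  case: inc {R} => [/thmap_lt[/= lt_yx _]|]; first by rewrite lt_gtF in lt_yx.
  by rewrite xy => -[-> ->]; rewrite !mem_nth ?iC.
by move: lt_xy; rewrite -(nth_index x xC) -(nth_index x yC) ij ltxx.
Qed.

Lemma maps_chain_pairs C D : chain D -> maps_chain C D ->
  th @: pairs_in [set x in C] = pairs_in [set x in D].
Proof.
move=> chD mCD; apply/setP => e; apply/imsetP/idP => [[e0] | ].
  rewrite !inE => /andP[xC yC] ->; apply: maps_chain_mem mCD xC yC _.
  by rewrite -surjective_pairing thmap_val -surjective_pairing.
case: mCD => inc [szC R]; rewrite !inE => /andP[uD vD].
have uv := valP e; rewrite -(chain_index_lt chD uD vD) in uv.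
have := R (val e).1 _ _ (introT andP (conj uv _)).
rewrite index_mem !nth_index // => /(_ vD).
case/thmap_Some=> e0 [e0E]; rewrite -surjective_pairing => /val_inj <-.
exists e0 => //; rewrite inE e0E.
have iD z : z \in D -> (index z D < size C)%N by rewrite szC index_mem.
by case: (inc); rewrite /= !inE !mem_nth ?iD.
Qed.

Definition pulls_back_triple a b c : Prop :=
  exists p q r,
    (thmap th (p, q) = Some (a, b) /\ thmap th (q, r) = Some (b, c) \/
     thmap th (q, r) = Some (a, b) /\ thmap th (p, q) = Some (b, c)) /\
    thmap th (p, r) = Some (a, c).

Lemma maps_chain_triple C D a b c : chain D -> maps_chain C D ->
  a \in D -> b \in D -> c \in D -> a < b -> b < c -> pulls_back_triple a b c.
Proof.
move=> chD [inc [szC R]] aD bD cD.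
rewrite -(chain_index_lt chD aD bD) -(chain_index_lt chD bD cD) => ab bc.
have cn : (index c D < size D)%N by rewrite index_mem.
have := R a _ _ (introT andP (conj ab (ltn_trans bc cn))).
have := R a _ _ (introT andP (conj bc cn)).
have := R a _ _ (introT andP (conj (ltn_trans ab bc) cn)).
rewrite !nth_index //; case: inc {R} => Rac Rbc Rab.
  by exists (nth a C (index a D)), (nth a C (index b D)), (nth a C (index c D));
    split; first left.
by exists (nth a C (index c D)), (nth a C (index b D)), (nth a C (index a D));
  split; first right.
Qed.

Lemma maximal_chain_pairs_image : inM th ->
  [set th @: A | A : {set @B d X} in maximal_chain_pairs] = maximal_chain_pairs.
Proof.
move=> thM; apply/eqP.
rewrite eqEcard (card_imset _ (imset_inj (inM_inj thM))) leqnn andbT.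
apply/subsetP => _ /imsetP[_ /imsetP[S Smax ->] ->].
have [D [C [Dmax CE mCD]]] := inM_maps_chain thM (maxset_maximal_chain Smax).
have -> : S = [set x in C] by apply/setP => x; rewrite inE CE Order.mem_enum.
rewrite (maps_chain_pairs Dmax.1 mCD); apply: imset_f.
exact: maximal_chain_maxset.
Qed.

Lemma inM_pulls_back_triple a b c : inM th -> a < b -> b < c -> pulls_back_triple a b c.
Proof.
move=> thM ab bc.
have abc : chain [:: a; b; c] by rewrite /chain /= ab bc.
have [T Tmax abcT] := maxset_exists (chain_is_chain abc).
have : pairs_in T \in [set th @: A | A : {set @B d X} in maximal_chain_pairs].
  by rewrite maximal_chain_pairs_image // imset_f.
case/imsetP => _ /imsetP[S Smax ->] TS.
have [D [C [Dmax CE mCD]]] := inM_maps_chain thM (maxset_maximal_chain Smax).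
have SC : S = [set x in C] by apply/setP => x; rewrite inE CE Order.mem_enum.
rewrite SC (maps_chain_pairs Dmax.1 mCD) in TS.
have inD x y (xy : x < y) : x \in T -> y \in T -> (x \in D) && (y \in D).
  move=> xT yT; have : (exist _ (x, y) xy : B) \in pairs_in T by rewrite inE /= xT.
  by rewrite TS !inE.
have [aT bT cT] : [/\ a \in T, b \in T & c \in T].
  by split; apply: (subsetP abcT); rewrite !inE eqxx ?orbT.
have /andP[aD bD] := inD _ _ ab aT bT.
have /andP[_ cD] := inD _ _ bc bT cT.
exact: maps_chain_triple Dmax.1 mCD aD bD cD ab bc.
Qed.

End ChainImages.

Section StepBalance.
Context {d : Order.disp_t} {X : finPOrderType d}.
Variables (th : @B d X -> @B d X) (z : X).

Definition step_balance (u v : X) : int :=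
  ((s_plus th u [:: v] z)%:Z - (s_minus th u [:: v] z)%:Z
   - (t_plus th u [:: v] z)%:Z + (t_minus th u [:: v] z)%:Z)%R.

Lemma walk_sum_step_balance u0 us : walk_sum step_balance u0 us =
  ((s_plus th u0 us z)%:Z - (s_minus th u0 us z)%:Z
   - (t_plus th u0 us z)%:Z + (t_minus th u0 us z)%:Z)%R.
Proof.
elim: us u0 => [|v us IH] u0; first by rewrite walk_sum_nil.
by rewrite walk_sum_cons IH /step_balance /s_plus /s_minus /t_plus /t_minus /= !PoszD; ring.
Qed.

Lemma balancedE u0 us : balanced th u0 us z <-> walk_sum step_balance u0 us = 0%R.
Proof. by rewrite walk_sum_step_balance /balanced; split=> h; lia. Qed.

Lemma step_balance_anti u v : step_balance u v = (- step_balance v u)%R.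
Proof. by rewrite /step_balance /s_plus /s_minus /t_plus /t_minus /=; lia. Qed.

Lemma step_balance_thmap p q u v : injective th -> thmap th (p, q) = Some (u, v) ->
  step_balance u v = ((p == z)%:Z - (q == z)%:Z)%R.
Proof.
move=> th_inj pq_uv; have [/= pq uv] := thmap_lt pq_uv.
rewrite /step_balance /s_plus /s_minus /t_plus /t_minus /= uv lt_gtF //.
have -> : [exists w, (z < w) && (thmap th (z, w) == Some (u, v))] = (p == z).
  apply/existsP/eqP => [[w /andP[_ /eqP zw_uv]] | <-].
    by case: (thmap_inj th_inj pq_uv zw_uv).
  by exists q; rewrite pq pq_uv eqxx.
have -> : [exists w, (w < z) && (thmap th (w, z) == Some (u, v))] = (q == z).
  apply/existsP/eqP => [[w /andP[_ /eqP wz_uv]] | <-].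
    by case: (thmap_inj th_inj pq_uv wz_uv).
  by exists p; rewrite pq pq_uv eqxx.
lia.
Qed.

Lemma step_balance_add a b c : inM th -> a < b -> b < c ->
  step_balance a c = (step_balance a b + step_balance b c)%R.
Proof.
move=> thM ab bc; have th_inj := inM_inj thM.
have [p [q [r [[[h1 h2] | [h1 h2]] h3]]]] := inM_pulls_back_triple thM ab bc;
  by rewrite !(step_balance_thmap th_inj h1, step_balance_thmap th_inj h2,
               step_balance_thmap th_inj h3); lia.
Qed.

End StepBalance.

Theorem lemma4p2 (d : Order.disp_t) (X : finPOrderType d) (th : @B d X -> @B d X) :
  @connected_poset d X -> inM th ->
  (inAM th <->
   forall (z x1 : X) (xr ys : seq X), weak_crown x1 xr ys ->
     balanced th x1 (crown_walk x1 xr ys) z).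
Proof.
move=> _ thM.
have walks_crowns z := closed_walk_sum_eq0_iff_crowns (step_balance_anti th z)
  (fun a b c => step_balance_add z thM).
split=> [[_ adm] z x1 xr ys cr | crowns].
  apply/balancedE; apply: ((walks_crowns z).1 _ _ _ _ cr).
  by move=> x s /adm /(_ z) /balancedE.
split=> // x s w z; apply/balancedE; apply: (walks_crowns z).2 w => x1 xr ys cr.
exact/balancedE/crowns.
Qed.
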